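(* Let $C_i, C_j, C_k$ be three pairwise disjoint closed circular discs in $\mathbb{R}^2$ with non-collinear centers $c_i,c_j,c_k$, and let $F$ be their feasible region. Then every point $q\in F$ illuminates every point of each of the three objective arcs: for every point $p$ on the objective arc of any of the three discs, the open segment from $q$ to $p$ does not meet the interior of $C_i$, $C_j$ or $C_k$.
   Context: For two disjoint closed discs $C_a, C_b$ with centers $c_a,c_b$, let $p_a, p_b$ be the points where the segment $\overline{c_ac_b}$ meets the boundary circles of $C_a$ and $C_b$ respectively, and let $l_a, l_b$ be the lines through $p_a$, $p_b$ perpendicular to $\overline{c_ac_b}$. The slab $S_{a,b}$ is the closed region between the parallel lines $l_a$ and $l_b$. For three pairwise disjoint discs $C_i,C_j,C_k$, the feasible region is $S_{i,j}\cap S_{j,k}\cap S_{i,k}$. Objective arcs: on each disc, say $C_i$, the edges $\overline{c_ic_j}$ and $\overline{c_ic_k}$ of the triangle $c_ic_jc_k$ meet the boundary circle of $C_i$ in two points; the objective arc of $C_i$ is the arc of the boundary circle of $C_i$ with these two points as endpoints whose length is less than half the circumference (the arc facing the interior of the triangle). Objective arcs of $C_j$, $C_k$ are defined analogously. *)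

From Stdlib Require Import Reals Lra.
Open Scope R_scope.

Definition pt := (R * R)%type.

Definition padd (a b : pt) : pt := (fst a + fst b, snd a + snd b).
Definition psub (a b : pt) : pt := (fst a - fst b, snd a - snd b).
Definition pscale (t : R) (a : pt) : pt := (t * fst a, t * snd a).
Definition dot (a b : pt) : R := fst a * fst b + snd a * snd b.
Definition cross (a b : pt) : R := fst a * snd b - snd a * fst b.
Definition pnorm (a : pt) : R := sqrt (dot a a).
Definition dist (a b : pt) : R := pnorm (psub a b).

Definition in_disc (c : pt) (r : R) (x : pt) : Prop := dist x c <= r.
Definition in_disc_interior (c : pt) (r : R) (x : pt) : Prop := dist x c < r.
Definition on_circle (c : pt) (r : R) (x : pt) : Prop := dist x c = r.

Definition discs_disjoint (ca : pt) (ra : R) (cb : pt) (rb : R) : Prop :=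
  ~ (exists x, in_disc ca ra x /\ in_disc cb rb x).

Definition collinear (a b c : pt) : Prop := cross (psub b a) (psub c a) = 0.

(* p_a : the point where segment c_a c_b meets the boundary circle of C_a. *)
Definition boundary_point (ca : pt) (ra : R) (cb : pt) : pt :=
  padd ca (pscale (ra / dist cb ca) (psub cb ca)).

(* Slab S_{a,b}: closed region between the lines through p_a and p_b
   perpendicular to c_a c_b. *)
Definition slab (ca : pt) (ra : R) (cb : pt) (rb : R) (x : pt) : Prop :=
  let v := psub cb ca in
  let pa := boundary_point ca ra cb in
  let pb := boundary_point cb rb ca in
  dot (psub x pa) v * dot (psub x pb) v <= 0.

Definition feasible (ci : pt) (ri : R) (cj : pt) (rj : R) (ck : pt) (rk : R)
  (x : pt) : Prop :=
  slab ci ri cj rj x /\ slab cj rj ck rk x /\ slab ci ri ck rk x.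

(* Objective arc of the disc (ca, ra) w.r.t. the two other centers cb, cc:
   the minor arc of the boundary circle between the points where the edges
   c_a c_b and c_a c_c meet it, i.e. the boundary points lying in the
   (convex, angle < pi) cone at c_a spanned by c_b - c_a and c_c - c_a. *)
Definition objective_arc (ca : pt) (ra : R) (cb cc : pt) (p : pt) : Prop :=
  on_circle ca ra p /\
  exists a b : R, 0 <= a /\ 0 <= b /\
    psub p ca = padd (pscale a (psub cb ca)) (pscale b (psub cc ca)).

Definition on_open_segment (q p x : pt) : Prop :=
  exists t : R, 0 < t < 1 /\ x = padd q (pscale t (psub p q)).

(* The feasible point q lies, for every pair of discs C_a, C_b, beyond the tangent line l_a of
   C_a facing c_b.  For a point p of the objective arc of C_a, these two half-planes (towards
   c_b and c_c) put q on the far side of the tangent line of C_a at p, so the segment qp meets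
   that tangent line only at p and avoids the interior of C_a.  For the other discs C_b it is
   enough that q and p both lie on the c_a side of l_b, a half-plane disjoint from the interior
   of C_b. *)
From Stdlib Require Import Reals Lra.
Open Scope R_scope.

Lemma dot_self_ge0 (w : pt) : 0 <= dot w w.
Proof. destruct w as [a b]; unfold dot; simpl; nra. Qed.

Lemma pnorm_ge0 (w : pt) : 0 <= pnorm w.
Proof. apply sqrt_pos. Qed.

Lemma pnorm_mul_self (w : pt) : pnorm w * pnorm w = dot w w.
Proof. apply sqrt_sqrt, dot_self_ge0. Qed.

Lemma pnorm_le_of_sqr (w : pt) (r : R) : 0 <= r -> dot w w <= r * r -> pnorm w <= r.
Proof. intros Hr H; unfold pnorm; rewrite <- (sqrt_square r Hr); now apply sqrt_le_1_alt. Qed.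

Lemma pnorm_ge_of_sqr (w : pt) (r : R) : 0 <= r -> r * r <= dot w w -> r <= pnorm w.
Proof. intros Hr H; unfold pnorm; rewrite <- (sqrt_square r Hr); now apply sqrt_le_1_alt. Qed.

Lemma dot_le_pnorm_mul (u v : pt) : dot u v <= pnorm u * pnorm v.
Proof.
  pose proof (pnorm_mul_self u); pose proof (pnorm_mul_self v).
  pose proof (pnorm_ge0 u); pose proof (pnorm_ge0 v).
  assert (Lagrange : dot u v * dot u v <= dot u u * dot v v).
  { destruct u as [a b], v as [c d]; unfold dot; simpl.
    replace ((a * a + b * b) * (c * c + d * d))
      with ((a * c + b * d) * (a * c + b * d) + (a * d - b * c) * (a * d - b * c)) by ring.
    pose proof (Rle_0_sqr (a * d - b * c)); unfold Rsqr in *; lra. }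
  destruct (Rle_dec (dot u v) 0); [nra|].
  assert (0 <= pnorm u * pnorm v) by nra.
  nra.
Qed.

Lemma dist_sym (a b : pt) : dist a b = dist b a.
Proof. unfold dist, pnorm, psub, dot; simpl; f_equal; ring. Qed.

Lemma disjoint_discs_far (ca cb : pt) (ra rb : R) : 0 < ra -> 0 < rb ->
  discs_disjoint ca ra cb rb -> ra + rb < dist cb ca.
Proof.
  intros Ha Hb Hdisj.
  set (d := dist cb ca).
  assert (Hd : d * d = dot (psub cb ca) (psub cb ca)) by apply pnorm_mul_self.
  assert (Hd0 : 0 <= d) by apply pnorm_ge0.
  apply Rnot_le_lt; intros Hle; apply Hdisj.
  (* The point dividing c_a c_b in the ratio ra : rb lies in both discs. *)
  set (s := ra / (ra + rb)).
  assert (Hs : s * (ra + rb) = ra) by (unfold s; field; lra).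
  assert (Hs0 : 0 < s) by (unfold s; apply Rdiv_lt_0_compat; lra).
  assert (Hs1 : 0 < 1 - s)
    by (replace (1 - s) with (rb / (ra + rb)) by (unfold s; field; lra);
        apply Rdiv_lt_0_compat; lra).
  assert (0 <= s * d <= ra) by (split; nra).
  assert (0 <= (1 - s) * d <= rb) by (split; nra).
  exists (padd ca (pscale s (psub cb ca))); split; unfold in_disc, dist;
    apply pnorm_le_of_sqr; try lra.
  - replace (dot _ _) with (s * s * (d * d))
      by (rewrite Hd; destruct ca, cb; unfold dot, padd, pscale, psub; simpl; ring).
    nra.
  - replace (dot _ _) with ((1 - s) * (1 - s) * (d * d))
      by (rewrite Hd; destruct ca, cb; unfold dot, padd, pscale, psub; simpl; ring).
    nra.
Qed.

(* The closed half-plane bounded by the line l_a of the slab S_{a,b} that does not contain C_a. *)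
Definition beyond_tangent (ca : pt) (ra : R) (cb q : pt) : Prop :=
  ra * dist cb ca <= dot (psub q ca) (psub cb ca).

Lemma slab_beyond_tangent (ca cb : pt) (ra rb : R) (q : pt) :
  0 <= ra -> 0 <= rb -> ra + rb < dist cb ca -> slab ca ra cb rb q ->
  beyond_tangent ca ra cb q /\ beyond_tangent cb rb ca q.
Proof.
  intros Ha Hb Hfar Hslab; unfold beyond_tangent; rewrite (dist_sym ca cb).
  unfold slab, boundary_point in Hslab; rewrite (dist_sym ca cb) in Hslab.
  set (d := dist cb ca) in *.
  assert (Hd : d * d = dot (psub cb ca) (psub cb ca)) by apply pnorm_mul_self.
  assert (Hd0 : 0 < d) by (assert (0 <= d) by apply pnorm_ge0; lra).
  set (A := dot (psub q ca) (psub cb ca)).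
  set (B := dot (psub q cb) (psub ca cb)).
  assert (HAB : A + B = d * d)
    by (rewrite Hd; unfold A, B; destruct q, ca, cb; unfold dot, psub; simpl; ring).
  (* The slab condition reads (A - ra d) (B - rb d) >= 0, and the two factors have positive sum. *)
  replace (dot (psub q (padd ca (pscale (ra / d) (psub cb ca)))) (psub cb ca))
    with (A - ra * d) in Hslab
    by (replace (ra * d) with (ra / d * (d * d)) by (field; lra); rewrite Hd; unfold A;
        destruct q, ca, cb; unfold dot, padd, pscale, psub; simpl; ring).
  replace (dot (psub q (padd cb (pscale (rb / d) (psub ca cb)))) (psub cb ca))
    with (rb * d - B) in Hslab
    by (replace (rb * d) with (rb / d * (d * d)) by (field; lra); rewrite Hd; unfold B;
        destruct q, ca, cb; unfold dot, padd, pscale, psub; simpl; ring).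
  assert (A - ra * d + (B - rb * d) > 0) by nra.
  split; nra.
Qed.

Lemma on_circle_radius_ge0 (ca : pt) (ra : R) (p : pt) : on_circle ca ra p -> 0 <= ra.
Proof. intros <-; apply pnorm_ge0. Qed.

Lemma dot_circle_le (ca : pt) (ra : R) (p cb : pt) :
  on_circle ca ra p -> dot (psub p ca) (psub cb ca) <= ra * dist cb ca.
Proof. intros <-; apply dot_le_pnorm_mul. Qed.

Lemma objective_arc_segment_outside (ca cb cc : pt) (ra : R) (q p x : pt) :
  beyond_tangent ca ra cb q -> beyond_tangent ca ra cc q ->
  objective_arc ca ra cb cc p -> on_open_segment q p x -> ra <= dist x ca.
Proof.
  intros Hqb Hqc [Hp [a [b [Ha [Hb Hcone]]]]] [t [Ht ->]].
  unfold beyond_tangent in *.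
  pose proof (on_circle_radius_ge0 _ _ _ Hp) as Hra.
  pose proof (dot_circle_le _ _ _ cb Hp) as Hpb.
  pose proof (dot_circle_le _ _ _ cc Hp) as Hpc.
  assert (Hpp : dot (psub p ca) (psub p ca) = ra * ra)
    by (rewrite <- Hp; symmetry; apply pnorm_mul_self).
  assert (Epp : dot (psub p ca) (psub p ca) =
      a * dot (psub p ca) (psub cb ca) + b * dot (psub p ca) (psub cc ca)).
  { rewrite Hcone at 2; destruct p, ca, cb, cc; unfold dot, padd, pscale, psub; simpl; ring. }
  assert (Eqp : dot (psub q ca) (psub p ca) =
      a * dot (psub q ca) (psub cb ca) + b * dot (psub q ca) (psub cc ca)).
  { rewrite Hcone; destruct q, ca, cb, cc; unfold dot, padd, pscale, psub; simpl; ring. }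
  assert (Htangent : ra * ra <= dot (psub q ca) (psub p ca)).
  { assert (0 <= dist cb ca) by apply pnorm_ge0.
    assert (0 <= dist cc ca) by apply pnorm_ge0.
    set (S := a * dist cb ca + b * dist cc ca).
    assert (0 <= S) by (unfold S; nra).
    assert (ra * ra <= ra * S) by (unfold S; nra).
    assert (ra <= S) by (destruct (Rle_lt_dec ra S); [assumption | nra]).
    unfold S in *; nra. }
  unfold dist; apply pnorm_ge_of_sqr; [lra|].
  replace (dot _ _) with (dot (psub p ca) (psub p ca)
      + 2 * (1 - t) * (dot (psub q ca) (psub p ca) - dot (psub p ca) (psub p ca))
      + (1 - t) * (1 - t) * dot (psub q p) (psub q p))
    by (destruct q, p, ca; unfold dot, padd, pscale, psub; simpl; ring).
  rewrite Hpp.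
  pose proof (dot_self_ge0 (psub q p)).
  assert (0 < 1 - t) by lra.
  assert (0 <= (1 - t) * (dot (psub q ca) (psub p ca) - ra * ra)) by nra.
  assert (0 <= (1 - t) * (1 - t) * dot (psub q p) (psub q p)) by
    (apply Rmult_le_pos; [nra | assumption]).
  lra.
Qed.

Lemma circle_segment_outside_other (ca cb : pt) (ra rb : R) (q p x : pt) :
  0 <= rb -> ra + rb < dist cb ca ->
  beyond_tangent cb rb ca q -> on_circle ca ra p ->
  on_open_segment q p x -> rb <= dist x cb.
Proof.
  intros Hb Hfar Hq Hp [t [Ht Hx]].
  pose proof (on_circle_radius_ge0 _ _ _ Hp).
  unfold beyond_tangent in Hq; rewrite (dist_sym ca cb) in Hq.
  set (d := dist cb ca) in *.
  assert (Hd : d * d = dot (psub cb ca) (psub cb ca)) by apply pnorm_mul_self.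
  assert (Hd0 : 0 < d) by lra.
  pose proof (dot_circle_le _ _ _ cb Hp) as Hpb; fold d in Hpb.
  assert (Hx_cs : dot (psub cb x) (psub cb ca) <= dist x cb * d)
    by (rewrite (dist_sym x cb); apply dot_le_pnorm_mul).
  assert (Ex : dot (psub cb x) (psub cb ca) =
      (1 - t) * dot (psub q cb) (psub ca cb) + t * (d * d - dot (psub p ca) (psub cb ca))).
  { rewrite Hd, Hx; destruct q, p, ca, cb; unfold dot, padd, pscale, psub; simpl; ring. }
  assert (rb * d <= d * d - dot (psub p ca) (psub cb ca)) by nra.
  assert (rb * d <= dot (psub cb x) (psub cb ca)) by (rewrite Ex; nra).
  nra.
Qed.

Lemma objective_arc_segment_avoids (ca cb cc : pt) (ra rb rc : R) (q p x : pt) :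
  0 <= rb -> 0 <= rc -> ra + rb < dist cb ca -> ra + rc < dist cc ca ->
  beyond_tangent ca ra cb q -> beyond_tangent ca ra cc q ->
  beyond_tangent cb rb ca q -> beyond_tangent cc rc ca q ->
  objective_arc ca ra cb cc p -> on_open_segment q p x ->
  ~ in_disc_interior ca ra x /\ ~ in_disc_interior cb rb x /\ ~ in_disc_interior cc rc x.
Proof.
  intros Hb Hc Hfb Hfc Hab Hac Hba Hca Harc Hseg; unfold in_disc_interior.
  pose proof (objective_arc_segment_outside _ _ _ _ _ _ _ Hab Hac Harc Hseg).
  pose proof (circle_segment_outside_other _ _ _ _ _ _ _ Hb Hfb Hba (proj1 Harc) Hseg).
  pose proof (circle_segment_outside_other _ _ _ _ _ _ _ Hc Hfc Hca (proj1 Harc) Hseg).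
  repeat split; lra.
Qed.

Theorem theorem1 (ci cj ck : pt) (ri rj rk : R)
  (hri : 0 < ri) (hrj : 0 < rj) (hrk : 0 < rk)
  (hij : discs_disjoint ci ri cj rj)
  (hjk : discs_disjoint cj rj ck rk)
  (hik : discs_disjoint ci ri ck rk)
  (hnc : ~ collinear ci cj ck)
  (q : pt) (hq : feasible ci ri cj rj ck rk q) :
  forall p : pt,
    (objective_arc ci ri cj ck p \/ objective_arc cj rj ci ck p \/
     objective_arc ck rk ci cj p) ->
    forall x : pt, on_open_segment q p x ->
      ~ in_disc_interior ci ri x /\ ~ in_disc_interior cj rj x /\
      ~ in_disc_interior ck rk x.
Proof.
  intros p Harc x Hseg.
  pose proof (disjoint_discs_far _ _ _ _ hri hrj hij) as Fij.
  pose proof (disjoint_discs_far _ _ _ _ hrj hrk hjk) as Fjk.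
  pose proof (disjoint_discs_far _ _ _ _ hri hrk hik) as Fik.
  assert (Fji : rj + ri < dist ci cj) by (rewrite dist_sym; lra).
  assert (Fkj : rk + rj < dist cj ck) by (rewrite dist_sym; lra).
  assert (Fki : rk + ri < dist ci ck) by (rewrite dist_sym; lra).
  apply Rlt_le in hri, hrj, hrk.
  destruct hq as [Sij [Sjk Sik]].
  destruct (slab_beyond_tangent _ _ _ _ _ hri hrj Fij Sij) as [Tij Tji].
  destruct (slab_beyond_tangent _ _ _ _ _ hrj hrk Fjk Sjk) as [Tjk Tkj].
  destruct (slab_beyond_tangent _ _ _ _ _ hri hrk Fik Sik) as [Tik Tki].
  destruct Harc as [H | [H | H]].
  - exact (objective_arc_segment_avoids _ _ _ _ _ _ _ _ _ hrj hrk Fij Fik Tij Tik Tji Tki H Hseg).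
  - destruct (objective_arc_segment_avoids _ _ _ _ _ _ _ _ _ hri hrk Fji Fjk Tji Tjk Tij Tkj H Hseg)
      as [? []]; auto.
  - destruct (objective_arc_segment_avoids _ _ _ _ _ _ _ _ _ hri hrj Fki Fkj Tki Tkj Tik Tjk H Hseg)
      as [? []]; auto.
Qed.
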